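(* Let $n\ge 2d$. The cone $\Sigma^{S'}_{n,2d}$ of symmetric forms that are sums of squares of forms in $T$ is full-dimensional in $\mathbb{R}^{\pi(2d)}$ (identified with the space $H^S_{n,2d}$ of symmetric forms of degree $2d$ in $n$ variables via coefficients in the basis $\{p^{(n)}_\lambda:\lambda\vdash 2d\}$).
   Context: $p^{(n)}_i=\frac1n(x_1^i+\dots+x_n^i)$, $p^{(n)}_\lambda=\prod_i p^{(n)}_{\lambda_i}$; $\pi(k)$ is the number of partitions of $k$. $H_{n,d}$ is the space of real forms of degree $d$ in $n$ variables, $H^S_{n,k}$ the symmetric forms of degree $k$; $\mathcal{S}_n$ acts by permuting variables. $T\subseteq H_{n,d}$ is the $\mathcal{S}_n$-submodule generated by $H^S_{n,d}$ together with all forms $(x_1^a-x_2^a)g$ with $a\in\{1,\dots,d\}$ and $g\in H^S_{n,d-a}$. *)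

From HB Require Import structures.
From mathcomp Require Import all_boot all_order all_algebra all_fingroup.
From mathcomp Require Import mpoly.
Set Implicit Arguments. Unset Strict Implicit. Unset Printing Implicit Defensive.
Import Order.TTheory GRing.Theory Num.Theory.
Local Open Scope ring_scope.

(* Variables are indexed x_1..x_n  ~  'X_i with i : 'I_n (x_1 = 'X_0, x_2 = 'X_1). *)

Definition symform (R : ringType) (n k : nat) (f : {mpoly R[n]}) : Prop :=
  f \is symmetric /\ f \is k.-homog.

Definition T_gen (R : ringType) (n d : nat) (f : {mpoly R[n]}) : Prop :=
  symform d f \/
  exists (a : nat) (i1 i2 : 'I_n) (g : {mpoly R[n]}),
    [/\ (1 <= a <= d)%N, val i1 = 0%N, val i2 = 1%N, symform (d - a) g &
        f = ('X_i1 ^+ a - 'X_i2 ^+ a) * g].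

(* T: the S_n-submodule of H_{n,d} generated by T_gen, i.e. the R-linear span
   of all permuted generators  s . g  (s in S_n). *)
Definition in_T (R : ringType) (n d : nat) (f : {mpoly R[n]}) : Prop :=
  exists s : seq (R * 'S_n * {mpoly R[n]}),
    (forall t, t \in s -> T_gen d t.2) /\
    f = \sum_(t <- s) t.1.1 *: msym t.1.2 t.2.

Definition in_SigmaS' (R : ringType) (n d : nat) (f : {mpoly R[n]}) : Prop :=
  symform (2 * d) f /\
  exists qs : seq {mpoly R[n]},
    (forall q, q \in qs -> in_T d q) /\ f = \sum_(q <- qs) q ^+ 2.

(* A cone C inside H^S_{n,2d} is full-dimensional iff its linear span is all of
   H^S_{n,2d}: every symmetric form of degree 2d is a finite linear combination
   of elements of C. *)
Definition full_dim_in_HS (R : ringType) (n k : nat) (C : {mpoly R[n]} -> Prop)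
  : Prop :=
  forall f : {mpoly R[n]}, symform k f ->
    exists s : seq (R * {mpoly R[n]}),
      (forall t, t \in s -> C t.2) /\ f = \sum_(t <- s) t.1 *: t.2.

From HB Require Import structures.
From mathcomp Require Import all_boot all_order all_algebra all_fingroup.
From mathcomp Require Import mpoly.
From mathcomp Require Import ring zify.
Set Implicit Arguments. Unset Strict Implicit. Unset Printing Implicit Defensive.
Import Order.TTheory GRing.Theory Num.Theory.
Local Open Scope ring_scope.

(** The power-sum products [p_λ], [|λ| = k], span the symmetric forms of degree
    [k]: by the fundamental theorem of symmetric polynomials it suffices to
    treat the elementary symmetric polynomials, and Newton's identities express
    these through power sums.  It thus suffices to write each [p_λ] with
    [|λ| = 2d] as a difference of sums of squares of forms in [T].  Removing a
    largest part [k] of [λ], the remaining parts split into two partitions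
    [μ, ν] of weight at most [d] each, so [k = a + b] with [a = d - |μ|] and
    [b = d - |ν|].  Then, by polarization,
      [4 p_μ p_ν p_k = Σ_i (x_i^a p_μ + x_i^b p_ν)^2
                     - Σ_i (x_i^a p_μ - x_i^b p_ν)^2],
    and [x_i^a p_μ] lies in [T]: averaging the generators [(x_i^a - x_j^a) p_μ]
    over [j] leaves [x_i^a p_μ] up to the symmetric form [p_a p_μ / n]. *)

Section Span.
Variables (R : pzRingType) (V : lmodType R).
Implicit Types (P Q : V -> Prop) (u v : V).

Definition in_span P v := exists s : seq (R * V),
  (forall t, t \in s -> P t.2) /\ v = \sum_(t <- s) t.1 *: t.2.

Lemma in_span_gen P v : P v -> in_span P v.
Proof.
move=> Pv; exists [:: (1, v)]; split; first by move=> t; rewrite inE => /eqP ->.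
by rewrite big_seq1 scale1r.
Qed.

Lemma in_span0 P : in_span P 0.
Proof. by exists [::]; rewrite big_nil. Qed.

Lemma in_spanD P u v : in_span P u -> in_span P v -> in_span P (u + v).
Proof.
move=> [s1 [P1 ->]] [s2 [P2 ->]]; exists (s1 ++ s2); rewrite big_cat.
by split=> // t; rewrite mem_cat => /orP[/P1 | /P2].
Qed.

Lemma in_spanZ P c v : in_span P v -> in_span P (c *: v).
Proof.
move=> [s [Ps ->]]; exists [seq (c * t.1, t.2) | t <- s]; split.
  by move=> t /mapP[u us ->] /=; apply: Ps.
by rewrite big_map scaler_sumr; apply: eq_bigr => t _; rewrite scalerA.
Qed.

Lemma in_spanB P u v : in_span P u -> in_span P v -> in_span P (u - v).
Proof. by move=> Pu Pv; rewrite -scaleN1r; apply/in_spanD/in_spanZ. Qed.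

Lemma in_span_sum P (I : eqType) (r : seq I) (F : I -> V) :
  (forall i, i \in r -> in_span P (F i)) -> in_span P (\sum_(i <- r) F i).
Proof.
elim: r => [|i r IHr] PF; first by rewrite big_nil; apply: in_span0.
rewrite big_cons; apply: in_spanD; first by apply: PF; rewrite mem_head.
by apply: IHr => j jr; apply: PF; rewrite inE jr orbT.
Qed.

Lemma in_span_trans P Q v :
  (forall u, P u -> in_span Q u) -> in_span P v -> in_span Q v.
Proof.
by move=> PQ [s [Ps ->]]; apply: in_span_sum => t ts; apply/in_spanZ/PQ/Ps.
Qed.

End Span.

Lemma in_spanM (R : comPzRingType) (A : algType R) (P Q S : A -> Prop) u v :
    (forall x y, P x -> Q y -> in_span S (x * y)) ->
  in_span P u -> in_span Q v -> in_span S (u * v).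
Proof.
move=> PQS [s1 [P1 ->]] [s2 [P2 ->]]; rewrite mulr_suml.
apply: in_span_sum => t ts; rewrite mulr_sumr; apply: in_span_sum => t' ts'.
by rewrite -scalerAl -scalerAr; apply/in_spanZ/in_spanZ/PQS; [apply: P1|apply: P2].
Qed.

Lemma split_bounded_seq (r : seq nat) (K c1 c2 : nat) :
    all (leq^~ K) r -> (sumn r + K <= c1 + c2)%N ->
  exists s1 s2, [/\ perm_eq r (s1 ++ s2), (sumn s1 <= c1)%N & (sumn s2 <= c2)%N].
Proof.
elim: r c1 => [|x r IHr] c1 /=; first by exists [::], [::].
case/andP=> xK rK r_le; have [x_le_c1 | c1_lt_x] := leqP x c1.
  have [s1 [s2 [perm_r le1 le2]]] := IHr (c1 - x)%N rK ltac:(lia).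
  by exists (x :: s1), s2; rewrite perm_cons /=; split=> //; lia.
by exists [::], (x :: r); split=> //=; lia.
Qed.

Lemma perm_split_halves (s : seq nat) (d : nat) :
    s != [::] -> sumn s = (2 * d)%N ->
  exists k s1 s2,
    [/\ perm_eq s (k :: s1 ++ s2), (sumn s1 <= d)%N & (sumn s2 <= d)%N].
Proof.
move=> s_nil sum_s; have perm_ss := permEl (perm_sort geq s).
have sorted_s : sorted geq (sort geq s).
  by apply: sort_sorted => x y; apply: leq_total.
case E: (sort geq s) perm_ss sorted_s => [|k r] perm_ss sorted_s.
  by rewrite perm_sym in perm_ss; rewrite (perm_nilP perm_ss) in s_nil.
have r_le : all (leq^~ k) r.
  by apply: order_path_min sorted_s => x y z /= yx zy; apply: leq_trans zy yx.
have sum_r : (sumn r + k <= d + d)%N.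
  by rewrite -(perm_sumn perm_ss) /= in sum_s; lia.
have [s1 [s2 [perm_r le1 le2]]] := split_bounded_seq r_le sum_r.
rewrite perm_sym in perm_ss; exists k, s1, s2; split=> //.
by apply: perm_trans perm_ss _; rewrite perm_cons.
Qed.

Section PowerSums.
Variables (R : nzRingType) (n : nat).
Local Notation mp := {mpoly R[n]}.

Lemma msymXn (s : 'S_n) (i : 'I_n) k : msym s ('X_i ^+ k : mp) = 'X_(s i) ^+ k.
Proof. by rewrite rmorphXn /= /msym mmapX mmap1U. Qed.

Lemma dhomogXn (i : 'I_n) k : ('X_i ^+ k : mp) \is k.-homog.
Proof.
have Xi_homog : ('X_i : mp) \is 1.-homog by rewrite dhomogX; apply/eqP/mdeg1.
by have := dhomogMn k Xi_homog; rewrite mul1n.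
Qed.

Lemma sum_msym_symmetric (F : 'I_n -> mp) :
  (forall s i, msym s (F i) = F (s i)) -> \sum_(i < n) F i \is symmetric.
Proof.
move=> msymF; apply/issymP => s; rewrite raddf_sum /=.
under eq_bigr do rewrite msymF.
by rewrite [RHS](reindex_inj (@perm_inj _ s)).
Qed.

(* Unnormalized: [psum k] is [n] times the paper's [p_k]; spans are unaffected. *)
Definition psum k : mp := \sum_(i < n) 'X_i ^+ k.

Definition psum_prod (s : seq nat) : mp := \prod_(k <- s) psum k.

Definition is_psum_prod w (f : mp) := exists s, sumn s = w /\ f = psum_prod s.

Lemma psum_sym k : psum k \is symmetric.
Proof. by apply: sum_msym_symmetric => s i; rewrite msymXn. Qed.

Lemma psum_homog k : psum k \is k.-homog.
Proof. by apply: rpred_sum => i _; apply: dhomogXn. Qed.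

Lemma psum_prod_cat s t : psum_prod (s ++ t) = psum_prod s * psum_prod t.
Proof. by rewrite /psum_prod big_cat. Qed.

Lemma psum_prod_sym s : psum_prod s \is symmetric.
Proof. by apply: rpred_prod => k _; apply: psum_sym. Qed.

Lemma psum_prod_homog s : psum_prod s \is (sumn s).-homog.
Proof.
elim: s => [|k s IHs]; first by rewrite /psum_prod big_nil dhomog1.
by rewrite /psum_prod big_cons; apply: dhomogM => //; apply: psum_homog.
Qed.

Lemma is_psum_prod1 : is_psum_prod 0 1.
Proof. by exists [::]; rewrite /psum_prod big_nil. Qed.

Lemma is_psum_prod_psum k : is_psum_prod k (psum k).
Proof. by exists [:: k]; rewrite /psum_prod big_seq1 /= addn0. Qed.

End PowerSums.

Section Newton.
Variables (R : numFieldType) (n : nat).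
Local Notation mp := {mpoly R[n]}.
Local Notation psum := (@psum R n).
Local Notation is_psum_prod := (@is_psum_prod R n).

Definition esym_psum_out j i : mp := \sum_(h : {set 'I_n} | #|h| == j)
  \sum_(l | l \notin h) (\prod_(x in h) 'X_x) * 'X_l ^+ i.

Definition esym_psum_in j i : mp := \sum_(h : {set 'I_n} | #|h| == j)
  \sum_(l in h) (\prod_(x in h) 'X_x) * 'X_l ^+ i.

Lemma mesym_mul_psum j i :
  mesym n R j * psum i = esym_psum_out j i + esym_psum_in j i.
Proof.
rewrite /mesym mulr_suml -big_split /=; apply: eq_bigr => h _.
by rewrite mulr_sumr (bigID (mem h)) addrC.
Qed.

Lemma esym_psum_inS j i : esym_psum_in j.+1 i = esym_psum_out j i.+1.
Proof.
rewrite /esym_psum_in /esym_psum_out.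
rewrite (exchange_big_dep xpredT) // [RHS](exchange_big_dep xpredT) //=.
apply: eq_bigr => l _.
rewrite (reindex_onto (fun h => l |: h) (fun h => h :\ l)); last first.
  by move=> h /andP[_ lh]; rewrite setD1K.
apply: eq_big => [h | h /andP[/andP[_ _] /eqP hE]].
  rewrite setU11 andbT cardsU1; case lh: (l \in h) => /=.
    rewrite andbF; apply/negbTE/nandP; right; apply/negP => /eqP hE.
    by have := setD11 l (l |: h); rewrite hE lh.
  by rewrite setU1K ?lh // eqxx andbT add1n eqSS.
have lh : l \notin h by rewrite -hE setD11.
by rewrite big_setU1 //= exprS; ring.
Qed.

Lemma esym_psum_in0 k : esym_psum_in k 0 = k%:R *: mesym n R k.
Proof.
rewrite /esym_psum_in /mesym scaler_sumr; apply: eq_bigr => h /eqP hk.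
rewrite [LHS](eq_bigr (fun=> \prod_(x in h) 'X_x)) => [|l _].
  by rewrite sumr_const hk scaler_nat.
by rewrite expr0 mulr1.
Qed.

Lemma esym_psum_out0 i : esym_psum_out 0 i = psum i.
Proof.
rewrite /esym_psum_out (big_pred1 set0) => [|h]; last by rewrite /= cards_eq0.
by rewrite big_set0; apply: eq_big => [l | l _]; rewrite ?in_set0 ?mul1r.
Qed.

Lemma in_span_psum_prodM a b (f g : mp) :
    in_span (is_psum_prod a) f -> in_span (is_psum_prod b) g ->
  in_span (is_psum_prod (a + b)) (f * g).
Proof.
apply: in_spanM => _ _ [s [<- ->]] [t [<- ->]]; apply: in_span_gen.
by exists (s ++ t); rewrite sumn_cat psum_prod_cat.
Qed.

(* Newton's recursion: [out (j+1) i = e_(j+1) p_i - out j (i+1)]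
   and [(j+1) e_(j+1) = out j 1], where [out = esym_psum_out]. *)
Lemma esym_psum_out_in_span j i :
  in_span (is_psum_prod (j + i)) (esym_psum_out j i).
Proof.
elim: j i => [|j IHj] i.
  by rewrite esym_psum_out0; apply/in_span_gen/is_psum_prod_psum.
have j1_neq0 : j.+1%:R != 0 :> R by rewrite pnatr_eq0.
have esymE : mesym n R j.+1 = j.+1%:R^-1 *: esym_psum_out j 1.
  by rewrite -esym_psum_inS esym_psum_in0 scalerA mulVf ?scale1r.
have -> : esym_psum_out j.+1 i =
    j.+1%:R^-1 *: (esym_psum_out j 1 * psum i) - esym_psum_out j i.+1.
  by rewrite scalerAl -esymE mesym_mul_psum esym_psum_inS addrK.
apply: in_spanB; last by rewrite addSnnS.
have -> : (j.+1 + i = j + 1 + i)%N by rewrite addn1.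
by apply/in_spanZ/in_span_psum_prodM/in_span_gen/is_psum_prod_psum; apply: IHj.
Qed.

Lemma mesym_in_span_psum_prod k : in_span (is_psum_prod k) (mesym n R k).
Proof.
case: k => [|j]; first by rewrite mesym0E; apply/in_span_gen/is_psum_prod1.
have j1_neq0 : j.+1%:R != 0 :> R by rewrite pnatr_eq0.
rewrite -[mesym _ _ _]scale1r -(mulVf j1_neq0) -scalerA -esym_psum_in0.
by rewrite esym_psum_inS -addn1; apply/in_spanZ/esym_psum_out_in_span.
Qed.

Lemma in_span_psum_prodX w (f : mp) k :
  in_span (is_psum_prod w) f -> in_span (is_psum_prod (w * k)) (f ^+ k).
Proof.
move=> f_span; elim: k => [|k IHk].
  by rewrite muln0; apply/in_span_gen/is_psum_prod1.
by rewrite exprS mulnS; apply: in_span_psum_prodM.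
Qed.

Lemma in_span_psum_prod_prod (I : Type) (r : seq I) (F : I -> mp) w :
    (forall i, in_span (is_psum_prod (w i)) (F i)) ->
  in_span (is_psum_prod (\sum_(i <- r) w i)) (\prod_(i <- r) F i).
Proof.
move=> F_span; elim: r => [|i r IHr].
  by rewrite !big_nil; apply/in_span_gen/is_psum_prod1.
by rewrite !big_cons; apply: in_span_psum_prodM.
Qed.

Lemma sym_in_span_psum_prod k (f : mp) :
  symform k f -> in_span (is_psum_prod k) f.
Proof.
case=> f_sym f_homog.
have [t [<- t_homog]] := sym_fundamental_homog f_sym f_homog.
rewrite comp_mpolyEX; apply: in_span_sum => m m_supp; apply: in_spanZ.
rewrite comp_mpolyX -(dhomogP _ _ _ t_homog m m_supp).
apply: in_span_psum_prod_prod => i.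
by rewrite tnth_mktuple mulnC; apply/in_span_psum_prodX/mesym_in_span_psum_prod.
Qed.

End Newton.

Section TMembership.
Variables (R : numFieldType) (n d : nat).
Local Notation mp := {mpoly R[n]}.

Lemma in_T_gen (f : mp) : T_gen d f -> in_T d f.
Proof.
move=> f_gen; exists [:: (1, 1%g, f)]; split.
  by move=> t; rewrite inE => /eqP ->.
by rewrite big_seq1 /= msym1m scale1r.
Qed.

Lemma in_T0 : in_T d (0 : mp).
Proof. by exists [::]; rewrite big_nil. Qed.

Lemma in_TD (f g : mp) : in_T d f -> in_T d g -> in_T d (f + g).
Proof.
move=> [s1 [T1 ->]] [s2 [T2 ->]]; exists (s1 ++ s2); rewrite big_cat.
by split=> // t; rewrite mem_cat => /orP[/T1 | /T2].
Qed.

Lemma in_TZ c (f : mp) : in_T d f -> in_T d (c *: f).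
Proof.
move=> [s [Ts ->]]; exists [seq (c * t.1.1, t.1.2, t.2) | t <- s]; split.
  by move=> t /mapP[u us ->] /=; apply: Ts.
by rewrite big_map scaler_sumr; apply: eq_bigr => t _; rewrite scalerA.
Qed.

Lemma in_T_span (f : mp) : in_span (in_T d) f -> in_T d f.
Proof.
move=> [s [Ts ->]]; elim: s Ts => [|t s IHs] Ts.
  by rewrite big_nil; apply: in_T0.
rewrite big_cons; apply: in_TD; first by apply/in_TZ/Ts; rewrite mem_head.
by apply: IHs => u us; apply: Ts; rewrite inE us orbT.
Qed.

Lemma in_T_msym (s : 'S_n) (f : mp) : in_T d f -> in_T d (msym s f).
Proof.
move=> [r [Tr ->]]; exists [seq (t.1.1, (t.1.2 * s)%g, t.2) | t <- r]; split.
  by move=> t /mapP[u ur ->] /=; apply: Tr.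
by rewrite big_map raddf_sum; apply: eq_bigr => t _; rewrite /= msymZ msymMm.
Qed.

Lemma Xn_sub_mul_sym_in_T (i0 i1 j : 'I_n) a (G : mp) :
    val i0 = 0%N -> val i1 = 1%N -> (1 <= a <= d)%N -> symform (d - a) G ->
  in_T d (('X_i0 ^+ a - 'X_j ^+ a) * G).
Proof.
move=> i0_0 i1_1 a_bound G_sym; have [-> | j_neq_i0] := eqVneq j i0.
  by rewrite subrr mul0r; apply: in_T0.
have i1_neq_i0 : i1 != i0 by apply/eqP => /(congr1 val); rewrite i0_0 i1_1.
have -> : ('X_i0 ^+ a - 'X_j ^+ a) * G =
    msym (tperm i1 j) (('X_i0 ^+ a - 'X_i1 ^+ a) * G).
  by rewrite msymM msymB !msymXn tpermL tpermD // (issymP _ G_sym.1).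
by apply/in_T_msym/in_T_gen; right; exists a, i0, i1, G.
Qed.

Lemma Xn_mul_sym_in_T (i : 'I_n) a (G : mp) :
    ((0 < a)%N -> (1 < n)%N) -> (a <= d)%N -> symform (d - a) G ->
  in_T d ('X_i ^+ a * G).
Proof.
move=> n_gt1 a_le_d [G_sym G_homog]; have [a0 | a_gt0] := posnP a.
  by rewrite a0 subn0 in G_homog *; rewrite expr0 mul1r; apply: in_T_gen; left.
have {}n_gt1 := n_gt1 a_gt0.
pose i0 : 'I_n := Ordinal (ltnW n_gt1); pose i1 : 'I_n := Ordinal n_gt1.
have -> : 'X_i ^+ a * G = msym (tperm i0 i) ('X_i0 ^+ a * G).
  by rewrite msymM msymXn tpermL (issymP _ G_sym).
apply/in_T_msym/in_T_span.
have n_neq0 : n%:R != 0 :> R by rewrite pnatr_eq0 -lt0n ltnW.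
have -> : 'X_i0 ^+ a * G = n%:R^-1 *:
    (\sum_(j < n) ('X_i0 ^+ a - 'X_j ^+ a) * G + @psum R n a * G).
  rewrite -mulr_suml sumrB sumr_const card_ord mulrBl addrNK.
  by rewrite mulrnAl -scaler_nat scalerA mulVf // scale1r.
apply/in_spanZ/in_spanD.
  apply: in_span_sum => j _; apply: in_span_gen.
  by apply: (Xn_sub_mul_sym_in_T (i1 := i1)); rewrite ?a_gt0.
apply/in_span_gen/in_T_gen; left; split; first by rewrite rpredM ?psum_sym.
by rewrite -(subnKC a_le_d); apply: dhomogM => //; apply: psum_homog.
Qed.

End TMembership.

Section SumsOfSquares.
Variables (R : numFieldType) (n d : nat).
Local Notation mp := {mpoly R[n]}.
Local Notation psum := (@psum R n).
Local Notation psum_prod := (@psum_prod R n).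
Hypothesis d_gt0_n_gt1 : (0 < d)%N -> (1 < n)%N.

Lemma sym_mul_psum_in_span_SigmaS' a b (G H : mp) :
    (a <= d)%N -> (b <= d)%N -> symform (d - a) G -> symform (d - b) H ->
  in_span (in_SigmaS' d) (G * H * psum (a + b)).
Proof.
move=> a_le_d b_le_d G_form H_form.
have [[G_sym G_homog] [H_sym H_homog]] := (G_form, H_form).
pose u (i : 'I_n) := 'X_i ^+ a * G; pose v (i : 'I_n) := 'X_i ^+ b * H.
pose Q (c : R) := \sum_(i < n) (u i + c *: v i) ^+ 2.
have Q_SigmaS' c : in_SigmaS' d (Q c).
  split; first split.
  - apply: sum_msym_symmetric => s i; rewrite rmorphXn /= msymD msymZ !msymM.
    by rewrite !msymXn (issymP _ G_sym) (issymP _ H_sym).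
  - rewrite mulnC; apply: rpred_sum => i _.
    apply/dhomogMn/rpredD; last apply: rpredZ.
      by rewrite -(subnKC a_le_d); apply: dhomogM => //; apply: dhomogXn.
    by rewrite -(subnKC b_le_d); apply: dhomogM => //; apply: dhomogXn.
  - exists [seq u i + c *: v i | i <- enum 'I_n]; rewrite big_map big_enum.
    split=> // q /mapP[i _ ->]; apply/in_TD/in_TZ; apply: Xn_mul_sym_in_T => //.
      by move/leq_trans/(_ a_le_d).
    by move/leq_trans/(_ b_le_d).
have -> : G * H * psum (a + b) = 4%:R^-1 *: (Q 1 - Q (-1)).
  apply: (canRL (scalerK _)); first by rewrite pnatr_eq0.
  rewrite /Q /psum -sumrB mulr_sumr scaler_sumr; apply: eq_bigr => i _.
  by rewrite scale1r scaleN1r scaler_nat /u /v exprD; ring.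
by apply/in_spanZ/in_spanB; apply: in_span_gen.
Qed.

Lemma psum_prod_in_span_SigmaS' (s : seq nat) :
  sumn s = (2 * d)%N -> in_span (in_SigmaS' d) (psum_prod s).
Proof.
move=> sum_s; have [s0 | s_nil] := eqVneq s [::].
  have d0 : d = 0%N by move: sum_s; rewrite s0 /=; lia.
  have one_form : symform 0 (1 : mp) by rewrite /symform rpred1 dhomog1.
  rewrite s0 /psum_prod big_nil d0; apply: in_span_gen; split=> //.
  exists [:: 1]; rewrite big_seq1 expr1n; split=> // q; rewrite inE => /eqP ->.
  by apply: in_T_gen; left.
have [k [s1 [s2 [perm_s s1_le s2_le]]]] := perm_split_halves s_nil sum_s.
have k_eq : k = ((d - sumn s1) + (d - sumn s2))%N.
  by move: sum_s; rewrite (perm_sumn perm_s) /= sumn_cat; lia.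
have -> : psum_prod s = psum_prod s1 * psum_prod s2 * psum k.
  by rewrite /psum_prod (perm_big _ perm_s) /= big_cons big_cat mulrC.
rewrite k_eq; apply: sym_mul_psum_in_span_SigmaS'; rewrite ?leq_subr //.
  by split; rewrite ?psum_prod_sym // subKn ?psum_prod_homog.
by split; rewrite ?psum_prod_sym // subKn ?psum_prod_homog.
Qed.

End SumsOfSquares.

Theorem lemma5p2 (R : realFieldType) (n d : nat) :
  (2 * d <= n)%N ->
  full_dim_in_HS (2 * d) (@in_SigmaS' R n d).
Proof.
move=> n_ge_2d f f_form.
apply: in_span_trans (sym_in_span_psum_prod f_form) => _ [s [sum_s ->]].
by apply: psum_prod_in_span_SigmaS' => // d_gt0; lia.
Qed.
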